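(* Let $M$ be a finitely generated $A_n(K)$-module. Let $\{g_1,\dots,g_p\}$ and $\{h_1,\dots,h_q\}$ be two finite systems of generators of $M$, with associated characteristic polynomials $$\phi_M(t_1,t_2)=\sum_{i=0}^n\sum_{j=0}^n a_{ij}\binom{t_1+i}{i}\binom{t_2+j}{j},\qquad \phi^*_M(t_1,t_2)=\sum_{i=0}^n\sum_{j=0}^n b_{ij}\binom{t_1+i}{i}\binom{t_2+j}{j}$$ ($a_{ij},b_{ij}\in\mathbf Z$). Let $\Lambda=\{(i,j):0\le i,j\le n,\ a_{ij}\neq0\}$ and $\Lambda'=\{(i,j):0\le i,j\le n,\ b_{ij}\ne0\}$; let $\mu=(\mu_1,\mu_2)$, $\nu=(\nu_1,\nu_2)$ be the maximal elements of $\Lambda$ with respect to the lexicographic and reverse lexicographic orders on $\mathbf N^2$ respectively, and $\sigma,\epsilon$ the corresponding maximal elements of $\Lambda'$. Then $\deg\phi_M=\deg\phi^*_M$ (call it $d$), $a_{nn}=b_{nn}$, $\mu=\sigma$, $\nu=\epsilon$, $a_{\mu_1\mu_2}=b_{\sigma_1\sigma_2}$, $a_{\nu_1\nu_2}=b_{\epsilon_1\epsilon_2}$, and for every monomial $t_1^it_2^j$ with $i+j=d$ its coefficient in $\phi_M$ equals its coefficient in $\phi^*_M$. In other words, these quantities do not depend on the finite system of generators the characteristic polynomial is associated with.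
   Context: $K$ is a field of characteristic zero and $A_n(K)$ is the Weyl algebra generated over $K$ by $x_1,\dots,x_n,\partial_1,\dots,\partial_n$, all pairs commuting except $\partial_ix_i=x_i\partial_i+1$; the monomials $x^\alpha\partial^\beta$ ($\alpha,\beta\in\mathbf N^n$) form a $K$-basis. For $r,s\in\mathbf N$, $W_{rs}$ is the $K$-span of the monomials $x^\alpha\partial^\beta$ with $|\alpha|\le r$, $|\beta|\le s$ ($W_{rs}=0$ if $r<0$ or $s<0$). For a finite generating system $f_1,\dots,f_k$ of $M$, the characteristic polynomial associated with it is the polynomial $\phi(t_1,t_2)\in\mathbf Q[t_1,t_2]$ with $\phi(r,s)=\dim_K\sum_{i=1}^kW_{rs}f_i$ for all sufficiently large integers $r,s$; it exists, has degree at most $n$ in each variable, and can be uniquely written in the displayed form with integer coefficients. $\binom tk=t(t-1)\cdots(t-k+1)/k!$, $\binom t0=1$. The lexicographic order on $\mathbf N^2$ compares first coordinates first; the reverse lexicographic order compares second coordinates first. *)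

From HB Require Import structures.
From mathcomp Require Import all_boot all_order all_algebra.
From mathcomp Require Import mpoly.
Set Implicit Arguments. Unset Strict Implicit. Unset Printing Implicit Defensive.
Import Order.TTheory GRing.Theory Num.Theory.
Local Open Scope ring_scope.

(* An A_n(K)-module is a K-vector space M together with K-linear operators
   X i (action of x_i) and D i (action of d_i) satisfying the defining
   relations of the Weyl algebra A_n(K). *)
Definition weyl_rel (K : fieldType) (n : nat) (M : lmodType K)
  (X D : 'I_n -> {linear M -> M}) : Prop :=
  [/\ forall i j v, X i (X j v) = X j (X i v),
      forall i j v, D i (D j v) = D j (D i v)
    & forall i j v, D i (X j v) = X j (D i v) + (i == j)%:R *: v].

(* x^alpha acting on v (the x_i commute, so the order is irrelevant) *)
Definition mono_act (K : fieldType) (n : nat) (M : lmodType K)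
  (Y : 'I_n -> {linear M -> M}) (a : 'I_n -> nat) (v : M) : M :=
  foldr (fun i w => iter (a i) (Y i) w) v (enum 'I_n).

Definition multi_le (n r : nat) : seq ('I_n -> nat) :=
  [seq (fun i => nat_of_ord (a i)) |
     a : {ffun 'I_n -> 'I_r.+1} <- enum {ffun 'I_n -> 'I_r.+1} & (\sum_i nat_of_ord (a i) <= r)%N].

(* The vectors x^alpha d^beta g (|alpha| <= r, |beta| <= s, g in gs);
   they span  sum_{g in gs} W_{rs} g. *)
Definition Wgens (K : fieldType) (n : nat) (M : lmodType K)
  (X D : 'I_n -> {linear M -> M}) (r s : nat) (gs : seq M) : seq M :=
  [seq mono_act X ab.1 (mono_act D ab.2 g) |
     g <- gs, ab <- [seq (a, b) | a <- multi_le n r, b <- multi_le n s]].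

Definition in_span (K : fieldType) (M : lmodType K) (x : M) (s : seq M) : Prop :=
  exists c : 'I_(size s) -> K, x = \sum_(i < size s) c i *: s`_i.

Definition lin_free (K : fieldType) (M : lmodType K) (s : seq M) : Prop :=
  forall c : 'I_(size s) -> K,
    \sum_(i < size s) c i *: s`_i = 0 -> forall i, c i = 0.

Definition span_dim (K : fieldType) (M : lmodType K) (s : seq M) (d : nat) : Prop :=
  exists b : seq M, [/\ size b = d, lin_free b & forall x, in_span x s <-> in_span x b].

Definition generates (K : fieldType) (n : nat) (M : lmodType K)
  (X D : 'I_n -> {linear M -> M}) (gs : seq M) : Prop :=
  forall m : M, exists r s : nat, in_span m (Wgens X D r s gs).

Definition is_char_coeffs (K : fieldType) (n : nat) (M : lmodType K)
  (X D : 'I_n -> {linear M -> M}) (gs : seq M) (a : 'I_n.+1 -> 'I_n.+1 -> int) : Prop :=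
  exists N : nat, forall r s : nat, (N <= r)%N -> (N <= s)%N ->
    exists d : nat, span_dim (Wgens X D r s gs) d /\
      (d%:Z = \sum_(i < n.+1) \sum_(j < n.+1)
                 a i j * ('C(r + i, i))%:Z * ('C(s + j, j))%:Z).

(* binom(x + k, k) = (x+1)(x+2)...(x+k)/k! as a polynomial expression *)
Definition binomP (R : comRingType) (x : R) (k : nat) : R :=
  \prod_(l < k) (x + (l.+1)%:R).

Definition weyl_charpoly (n : nat) (a : 'I_n.+1 -> 'I_n.+1 -> int) : {mpoly rat[2]} :=
  \sum_(i < n.+1) \sum_(j < n.+1)
     ((a i j)%:~R / ((i`!)%:R * (j`!)%:R)) *:
       (binomP 'X_(0 : 'I_2) i * binomP 'X_(1 : 'I_2) j).

Definition is_lexmax (n : nat) (a : 'I_n.+1 -> 'I_n.+1 -> int) (i j : 'I_n.+1) : Prop :=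
  a i j != 0 /\ forall i' j' : 'I_n.+1, a i' j' != 0 ->
    (i' < i)%N \/ (i' = i /\ (j' <= j)%N).

Definition is_revlexmax (n : nat) (a : 'I_n.+1 -> 'I_n.+1 -> int) (i j : 'I_n.+1) : Prop :=
  a i j != 0 /\ forall i' j' : 'I_n.+1, a i' j' != 0 ->
    (j' < j)%N \/ (j' = j /\ (i' <= i)%N).

From HB Require Import structures.
From mathcomp Require Import all_boot all_order all_algebra.
From mathcomp Require Import mpoly.
From mathcomp.real_closed Require polyrcf.
From mathcomp Require Import ring zify.
Import Order.TTheory GRing.Theory Num.Theory.
Set Implicit Arguments. Unset Strict Implicit. Unset Printing Implicit Defensive.
Local Open Scope ring_scope.

(* If the systems g and h generate M, there is k such that every x^a d^b g_i with
   |a| <= r, |b| <= s lies in W_{r+k,s+k} h; hence dim W_rs g <= dim W_{r+k,s+k} h,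
   and symmetrically.  So each characteristic function dominates the other up to a
   shift, and each dominates 0.  An eventual inequality p(t) <= q(t + k) between
   polynomials of degree <= d bounds the degree-d coefficient of p by that of q.
   Applied along rows and then columns of the coefficient array, downwards in the
   lexicographic order, this identifies the lexicographically (and, after
   transposition, reverse lexicographically) maximal coefficients; applied along the
   rays t2 = lam t1 for all lam it identifies the top-degree part of the
   characteristic polynomial. *)

Section Span.
Variables (K : fieldType) (M : lmodType K).
Implicit Types (s t : seq M) (x y : M).

Lemma in_span0 t : in_span 0 t.
Proof. by exists (fun _ => 0); rewrite big1 // => i _; rewrite scale0r. Qed.

Lemma in_spanD t x y : in_span x t -> in_span y t -> in_span (x + y) t.
Proof.
move=> [c ->] [e ->]; exists (fun i => c i + e i).
by rewrite -big_split; apply: eq_bigr => i _; rewrite scalerDl.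
Qed.

Lemma in_spanZ t c x : in_span x t -> in_span (c *: x) t.
Proof.
move=> [e ->]; exists (fun i => c * e i).
by rewrite scaler_sumr; apply: eq_bigr => i _; rewrite scalerA.
Qed.

Lemma in_span_sum t m (F : 'I_m -> M) :
  (forall i, in_span (F i) t) -> in_span (\sum_i F i) t.
Proof.
elim: m F => [|m IH] F HF; first by rewrite big_ord0; apply: in_span0.
by rewrite big_ord_recr; apply: in_spanD; [apply: IH|].
Qed.

Lemma mem_in_span t x : x \in t -> in_span x t.
Proof.
move=> xt; have ix : (index x t < size t)%N by rewrite index_mem.
exists (fun i => (i == Ordinal ix)%:R).
rewrite (bigD1 (Ordinal ix)) //= eqxx scale1r nth_index // big1 ?addr0 //.
by move=> i /negbTE ->; rewrite scale0r.
Qed.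

Lemma in_span_trans s t x :
  in_span x s -> (forall i : 'I_(size s), in_span s`_i t) -> in_span x t.
Proof. by move=> [c ->] st; apply: in_span_sum => i; apply: in_spanZ. Qed.

Lemma in_span_linear (f : {linear M -> M}) s t x :
  in_span x s -> (forall i : 'I_(size s), in_span (f s`_i) t) -> in_span (f x) t.
Proof.
move=> [c ->] st; rewrite linear_sum; apply: in_span_sum => i.
by rewrite linearZ; apply: in_spanZ.
Qed.

(* The coordinates of a free family in another spanning family form a matrix
   with trivial kernel, whence the rank bound. *)
Lemma span_dim_leq s t d1 d2 : span_dim s d1 -> span_dim t d2 ->
  (forall i : 'I_(size s), in_span s`_i t) -> (d1 <= d2)%N.
Proof.
move=> [b1 [<- free1 span1]] [b2 [<- _ span2]] st.
have coord (i : 'I_(size b1)) : exists u : {ffun 'I_(size b2) -> K},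
    b1`_i = \sum_(l < size b2) u l *: b2`_l.
  have /span2 [c ->] : in_span b1`_i t.
    by apply: in_span_trans st; apply/span1/mem_in_span/mem_nth.
  by exists (finfun c); apply: eq_bigr => l _; rewrite ffunE.
have [u Hu] := fin_all_exists coord.
pose C := \matrix_(i < size b1, l < size b2) u i l.
have kerC (v : 'rV_(size b1)) : v *m C = 0 -> v = 0.
  move=> vC; apply/rowP => i; rewrite mxE; apply: (free1 (fun i => v 0 i)).
  transitivity (\sum_(l < size b2) (v *m C) 0 l *: b2`_l); last first.
    by rewrite vC big1 // => l _; rewrite mxE scale0r.
  under eq_bigr => j _ do rewrite Hu scaler_sumr.
  rewrite exchange_big; apply: eq_bigr => l _.
  by rewrite mxE scaler_suml; apply: eq_bigr => j _; rewrite scalerA mxE.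
have kerC0 : kermx C = 0.
  by apply/row_matrixP => i; rewrite row0; apply: kerC; rewrite -row_mul mulmx_ker row0.
have := mxrank_ker C; rewrite kerC0 mxrank0 => /esym/eqP; rewrite subn_eq0 => le.
exact: leq_trans le (rank_leq_col C).
Qed.

End Span.

Section MonomialFold.
Variables (T : Type) (n : nat) (Y : 'I_n -> T -> T).

Definition mono_seq (a : 'I_n -> nat) (l : seq 'I_n) (v : T) : T :=
  foldr (fun i w => iter (a i) (Y i) w) v l.

Definition incr_at (a : 'I_n -> nat) j := fun i => (a i + (i == j))%N.
Definition decr_at (a : 'I_n -> nat) j := fun i => (a i - (i == j))%N.

Lemma eq_in_mono_seq a a' l v : {in l, a =1 a'} -> mono_seq a l v = mono_seq a' l v.
Proof.
elim: l => //= i l IH eqa; rewrite eqa ?mem_head // IH // => j jl.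
by apply: eqa; rewrite in_cons jl orbT.
Qed.

Lemma iter_commute (f g : T -> T) m v :
  (forall u, f (g u) = g (f u)) -> f (iter m g v) = iter m g (f v).
Proof. by move=> fg; elim: m => //= m <-. Qed.

Lemma mono_seq_commute (f : T -> T) a l v :
  {in l, forall i u, f (Y i u) = Y i (f u)} -> f (mono_seq a l v) = mono_seq a l (f v).
Proof.
elim: l => //= i l IH fY; rewrite iter_commute; last by apply: fY; rewrite mem_head.
by rewrite IH // => j jl; apply: fY; rewrite in_cons jl orbT.
Qed.

Lemma mono_seq_incr a l j v :
  (forall i k u, Y i (Y k u) = Y k (Y i u)) -> uniq l -> j \in l ->
  Y j (mono_seq a l v) = mono_seq (incr_at a j) l v.
Proof.
move=> YC; elim: l => //= i l IH /andP [il ul]; rewrite in_cons.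
have incr_out k : k \in l -> incr_at a i k = a k.
  by move=> kl; rewrite /incr_at; case: eqP => [ki|]; [rewrite -ki kl in il|rewrite addn0].
case/orP => [/eqP ->|jl].
  by rewrite (eq_in_mono_seq _ incr_out) /incr_at eqxx addn1.
rewrite iter_commute // IH //; congr iter.
by rewrite /incr_at; case: eqP => [ij|]; [rewrite ij jl in il|rewrite addn0].
Qed.

Lemma mono_seq_ind (P : nat -> T -> Prop) a l k v :
  (forall i m w, P m w -> P m.+1 (Y i w)) -> P k v ->
  P (k + \sum_(i <- l) a i)%N (mono_seq a l v).
Proof.
move=> PY Pv; elim: l => [|i l IH] /=; first by rewrite big_nil addn0.
rewrite big_cons addnCA; elim: (a i) => [|m IHm] /=; first by rewrite add0n.
by rewrite addSn; apply: PY.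
Qed.

Lemma sum_incr_at a j : (\sum_i incr_at a j i = (\sum_i a i).+1)%N.
Proof.
rewrite big_split /= -addn1; congr addn.
by rewrite (bigD1 j) //= eqxx big1 // => i /negPf ->.
Qed.

Lemma sum_decr_at a j : (\sum_i decr_at a j i <= \sum_i a i)%N.
Proof. by apply: leq_sum => i _; apply: leq_subr. Qed.

End MonomialFold.

Section LinearFold.
Variables (K : fieldType) (M : lmodType K) (n : nat).

Lemma iter_linear (f : {linear M -> M}) m c u w :
  iter m f (u + c *: w) = iter m f u + c *: iter m f w.
Proof. by elim: m => //= m ->; rewrite linearD linearZ. Qed.

Variables (X D : 'I_n -> {linear M -> M}).
Hypothesis weylXD : weyl_rel X D.

Lemma weyl_iterX i j m w : D j (iter m (X i) w) =
  iter m (X i) (D j w) + ((i == j) * m)%:R *: iter m.-1 (X i) w.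
Proof.
have [_ _ DX] := weylXD.
elim: m => [|m IH] /=; first by rewrite muln0 scale0r addr0.
rewrite DX IH linearD linearZ /= -addrA eq_sym; congr (_ + _).
case: m {IH} => [|m] /=; first by rewrite muln0 scale0r add0r muln1.
by rewrite [in RHS]mulnS natrD scalerDl addrC.
Qed.

Lemma weyl_mono_seqX j a l w : uniq l -> j \in l ->
  D j (mono_seq (fun i => X i) a l w) =
  mono_seq (fun i => X i) a l (D j w) +
  (a j)%:R *: mono_seq (fun i => X i) (decr_at a j) l w.
Proof.
have [_ _ DX] := weylXD.
elim: l => //= i l IH /andP [il ul]; rewrite in_cons.
have decr_out k : k \in l -> decr_at a i k = a k.
  by move=> kl; rewrite /decr_at; case: eqP => [ki|]; [rewrite -ki kl in il|rewrite subn0].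
case/orP => [/eqP ->|jl].
  rewrite weyl_iterX eqxx mul1n {1}/decr_at eqxx subn1 (eq_in_mono_seq _ _ decr_out).
  congr (iter _ _ _ + _); apply: mono_seq_commute => k kl u.
  by rewrite DX; case: eqP => [ki|]; [rewrite ki kl in il|rewrite scale0r addr0].
have /negPf ij : i != j by apply: contraNneq il => ->.
by rewrite weyl_iterX IH // ij mul0n scale0r addr0 iter_linear /decr_at ij subn0.
Qed.

End LinearFold.

Section WeylSpan.
Variables (K : fieldType) (n : nat) (M : lmodType K).
Variables (X D : 'I_n -> {linear M -> M}).
Hypothesis weylXD : weyl_rel X D.

Lemma eq_mono_act (Y : 'I_n -> {linear M -> M}) a a' v :
  a =1 a' -> mono_act Y a v = mono_act Y a' v.
Proof. by move=> eqa; apply: eq_in_mono_seq => i _. Qed.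

Let ffun_bounded m :=
  [seq f : {ffun 'I_n -> 'I_m.+1} <- enum {ffun 'I_n -> 'I_m.+1} | (\sum_i nat_of_ord (f i) <= m)%N].
Let nat_of_ffun m (f : {ffun 'I_n -> 'I_m.+1}) i := nat_of_ord (f i).

Lemma WgensE r s gs : Wgens X D r s gs =
  flatten [seq [seq mono_act X (nat_of_ffun a) (mono_act D (nat_of_ffun b) g) |
     a <- ffun_bounded r, b <- ffun_bounded s] | g <- gs].
Proof.
rewrite /Wgens; congr flatten; apply: eq_map => g.
by rewrite map_allpairs allpairs_mapl allpairs_mapr.
Qed.

Lemma mem_Wgens r s gs a b g : (\sum_i a i <= r)%N -> (\sum_i b i <= s)%N -> g \in gs ->
  mono_act X a (mono_act D b g) \in Wgens X D r s gs.
Proof.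
move=> ar bs gg; rewrite WgensE; apply/flatten_mapP; exists g => //.
have ord_fun m (c : 'I_n -> nat) : (\sum_i c i <= m)%N ->
    exists2 f, f \in ffun_bounded m & c =1 nat_of_ffun f.
  move=> cm; have le i : (c i < m.+1)%N.
    by rewrite ltnS; apply: leq_trans cm; rewrite (bigD1 i) //= leq_addr.
  exists [ffun i => Ordinal (le i)] => [|i]; last by rewrite /nat_of_ffun ffunE.
  by rewrite mem_filter mem_enum andbT; under eq_bigr => i _ do rewrite ffunE.
have [fa fa_r ea] := ord_fun r a ar; have [fb fb_s eb] := ord_fun s b bs.
by rewrite (eq_mono_act _ _ ea) (eq_mono_act _ _ eb); apply: allpairs_f.
Qed.

Lemma WgensP r s gs y : y \in Wgens X D r s gs -> exists a b g,
  [/\ g \in gs, (\sum_i a i <= r)%N, (\sum_i b i <= s)%N & y = mono_act X a (mono_act D b g)].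
Proof.
rewrite WgensE => /flatten_mapP [g gg /allpairsP [[fa fb] /= []]].
rewrite !mem_filter => /andP [fa_r _] /andP [fb_s _] ->.
by exists (nat_of_ffun fa), (nat_of_ffun fb), g.
Qed.

Lemma mono_act_incr (Y : 'I_n -> {linear M -> M}) a j v :
  (forall i k u, Y i (Y k u) = Y k (Y i u)) ->
  Y j (mono_act Y a v) = mono_act Y (incr_at a j) v.
Proof. by move=> YY; apply: mono_seq_incr; rewrite ?enum_uniq ?mem_enum. Qed.

Lemma weyl_mono_actX j a w : D j (mono_act X a w) =
  mono_act X a (D j w) + (a j)%:R *: mono_act X (decr_at a j) w.
Proof. by apply: weyl_mono_seqX; rewrite ?enum_uniq ?mem_enum. Qed.

Local Notation W := (Wgens X D).

Lemma in_Wgens_monotone h r s r' s' y : in_span y (W r s h) ->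
  (r <= r')%N -> (s <= s')%N -> in_span y (W r' s' h).
Proof.
move=> yW rr ss; apply: (in_span_trans yW) => i.
have /WgensP [a [b [g [gh ar bs ->]]]] := mem_nth 0 (ltn_ord i).
by apply/mem_in_span/mem_Wgens => //; apply: leq_trans; eassumption.
Qed.

Lemma in_Wgens_X h r s y i : in_span y (W r s h) -> in_span (X i y) (W r.+1 s h).
Proof.
have [XX _ _] := weylXD.
move=> yW; apply: (in_span_linear yW) => l.
have /WgensP [a [b [g [gh ar bs ->]]]] := mem_nth 0 (ltn_ord l).
rewrite mono_act_incr //.
by apply/mem_in_span/mem_Wgens; rewrite ?sum_incr_at.
Qed.

Lemma in_Wgens_D h r s y i : in_span y (W r s h) -> in_span (D i y) (W r s.+1 h).
Proof.
have [_ DD _] := weylXD.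
move=> yW; apply: (in_span_linear yW) => l.
have /WgensP [a [b [g [gh ar bs ->]]]] := mem_nth 0 (ltn_ord l).
rewrite weyl_mono_actX mono_act_incr //.
apply: in_spanD; last apply: in_spanZ; apply/mem_in_span/mem_Wgens; rewrite ?sum_incr_at //.
  exact: leq_trans (sum_decr_at _ _) ar.
exact: ltnW.
Qed.

Lemma in_Wgens_monoX h r s y a : in_span y (W r s h) ->
  in_span (mono_act X a y) (W (r + \sum_i a i) s h).
Proof.
move=> yW; rewrite -big_enum.
apply: (mono_seq_ind (P := fun m w => in_span w (W m s h))) yW.
by move=> i m w; apply: in_Wgens_X.
Qed.

Lemma in_Wgens_monoD h r s y b : in_span y (W r s h) ->
  in_span (mono_act D b y) (W r (s + \sum_i b i) h).
Proof.
move=> yW; rewrite -big_enum.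
apply: (mono_seq_ind (P := fun m w => in_span w (W r m h))) yW.
by move=> i m w; apply: in_Wgens_D.
Qed.

Lemma generators_in_Wgens h (gs : seq M) : generates X D h ->
  exists k, {in gs, forall g, in_span g (W k k h)}.
Proof.
move=> genh; elim: gs => [|g gs [k Hk]]; first by exists 0%N.
have [r [s gW]] := genh g.
exists (maxn k (maxn r s)) => g'; rewrite in_cons => /predU1P [->|g'gs].
  by apply: (in_Wgens_monotone gW); rewrite !leq_max leqnn ?orbT.
by apply: (in_Wgens_monotone (Hk _ g'gs)); rewrite leq_max leqnn.
Qed.

Lemma Wgens_in_span_Wgens g h : generates X D h -> exists k, forall r s r' s',
  (r + k <= r')%N -> (s + k <= s')%N ->
  forall i : 'I_(size (W r s g)), in_span (W r s g)`_i (W r' s' h).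
Proof.
move=> genh; have [k Hk] := generators_in_Wgens g genh.
exists k => r s r' s' rr ss i.
have /WgensP [a [b [g0 [gg ar bs ->]]]] := mem_nth 0 (ltn_ord i).
apply: (in_Wgens_monotone (in_Wgens_monoX a (in_Wgens_monoD b (Hk _ gg)))).
  by apply: leq_trans rr; rewrite addnC leq_add2r.
by apply: leq_trans ss; rewrite addnC leq_add2r.
Qed.

End WeylSpan.

(* Otherwise [q(t + k) - p(t)] would be a polynomial of degree [d] with negative
   leading coefficient, hence eventually negative. *)
Lemma le_coef_of_eventually_le (R : archiRealFieldType) (p q : {poly R}) d N k :
  (forall t, (N <= t)%N -> p.[t%:R] <= q.[(t + k)%:R]) ->
  (size p <= d.+1)%N -> (size q <= d.+1)%N -> p`_d <= q`_d.
Proof.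
move=> pq sp sq; pose w := q \Po ('X + (k%:R)%:P).
have sw : size w = size q by rewrite size_comp_poly2 // size_XaddC.
have wd : w`_d = q`_d.
  have [sqd|sqd] := eqVneq (size q) d.+1; last first.
    by rewrite leq_eqVlt (negPf sqd) ltnS in sq; rewrite !nth_default ?sw.
  have := @lead_coef_comp _ q ('X + (k%:R)%:P).
  by rewrite size_XaddC lead_coefXaddC expr1n mulr1 !lead_coefE sw sqd => ->.
have wq t : w.[t%:R] = q.[(t + k)%:R] by rewrite horner_comp !hornerE natrD.
pose r := w - p.
rewrite -subr_ge0 -wd -coefB -/r leNgt; apply/negP => rd_lt0.
have sr : size r = d.+1.
  apply/anti_leq/andP; split; last first.
    by rewrite ltnNge; apply: contraTN rd_lt0 => le; rewrite nth_default // ltxx.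
  by apply: leq_trans (size_polyD _ _) _; rewrite size_polyN geq_max sw sq sp.
have : 0 < lead_coef (- r) by rewrite lead_coefN lead_coefE sr oppr_gt0.
move=> /polyrcf.poly_pinfty_gt_lc [x0 Hx0].
pose t := maxn N (Num.Def.archi_bound `|x0|).
have x0t : x0 <= t%:R.
  apply: le_trans (ler_norm x0) (ltW (lt_le_trans (archi_boundP (normr_ge0 x0)) _)).
  by rewrite ler_nat leq_maxr.
have := Hx0 _ x0t; rewrite lead_coefN lead_coefE sr hornerN lerN2 => rt_le.
have : 0 <= r.[t%:R] by rewrite hornerD hornerN wq subr_ge0 pq ?leq_maxl.
by move=> /le_trans /(_ rt_le); rewrite leNgt rd_lt0.
Qed.

Section LeadTerm.
Variable R : comNzRingType.
Implicit Types (P Q : {poly R}) (mu : R).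

Definition has_lead_term P mu (e : nat) := (size (P - mu *: 'X^e)%R <= e)%N.

Lemma has_lead_termM P Q m1 m2 e1 e2 :
  has_lead_term P m1 e1 -> has_lead_term Q m2 e2 ->
  has_lead_term (P * Q) (m1 * m2) (e1 + e2).
Proof.
rewrite /has_lead_term; set P' := P - _; set Q' := Q - _ => sP sQ.
have -> : P * Q - (m1 * m2) *: 'X^(e1 + e2) =
    (m1 *: 'X^e1) * Q' + P' * (m2 *: 'X^e2) + P' * Q'.
  by rewrite /P' /Q' -!mul_polyC polyCM exprD; ring.
have sX m e : (size (m *: 'X^e : {poly R}) <= e.+1)%N.
  by apply: leq_trans (size_scale_leq _ _) _; rewrite size_polyXn.
have sM (A B : {poly R}) a b : (size A <= a)%N -> (size B <= b)%N ->
    (size (A * B)%R <= (a + b).-1)%N.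
  by move=> sA sB; apply: leq_trans (size_polyMleq _ _) _; move: (leq_add sA sB); lia.
apply: leq_trans (size_polyD _ _) _; rewrite geq_max (leq_trans (sM _ _ _ _ sP sQ)) ?andbT;
  last by lia.
apply: leq_trans (size_polyD _ _) _; rewrite geq_max.
rewrite (leq_trans (sM _ _ _ _ (sX m1 e1) sQ)) ?(leq_trans (sM _ _ _ _ sP (sX m2 e2))) //.
all: lia.
Qed.

Lemma has_lead_term_binomP mu i : has_lead_term (binomP (mu *: 'X) i) (mu ^+ i) i.
Proof.
elim: i => [|i IH]; first by rewrite /binomP big_ord0 /has_lead_term expr0 scale1r subrr size_poly0.
rewrite /binomP big_ord_recr -/(binomP _ i) exprSr -addn1.
apply: has_lead_termM => //; rewrite /has_lead_term expr1 addrC addKr.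
by rewrite -polyC_natr size_polyC_leq1.
Qed.

Lemma coef_sum_lead_terms (I : finType) (c mu : I -> R) (P : I -> {poly R}) (e : I -> nat)
    d m :
  (forall k, has_lead_term (P k) (mu k) (e k)) -> (forall k, c k != 0 -> (e k <= d)%N) ->
  (d <= m)%N -> (\sum_k c k *: P k)`_m = \sum_k c k * mu k * (e k == m)%:R.
Proof.
move=> lead ed dm; rewrite coef_sum; apply: eq_bigr => k _.
rewrite coefZ; have [->|ck] := eqVneq (c k) 0; first by rewrite !mul0r.
rewrite -(subrK (mu k *: 'X^(e k)) (P k)) coefD coefZ coefXn nth_default ?add0r.
  by rewrite mulrA eq_sym.
exact: leq_trans (lead k) (leq_trans (ed k ck) dm).
Qed.

Lemma size_sum_lead_terms (I : finType) (c mu : I -> R) (P : I -> {poly R}) (e : I -> nat)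
    d :
  (forall k, has_lead_term (P k) (mu k) (e k)) -> (forall k, c k != 0 -> (e k <= d)%N) ->
  (size (\sum_k c k *: P k)%R <= d.+1)%N.
Proof.
move=> lead ed; apply/leq_sizeP => m dm.
rewrite (coef_sum_lead_terms lead ed (ltnW dm)) big1 // => k _.
have [->|ck] := eqVneq (c k) 0; first by rewrite !mul0r.
by rewrite (ltn_eqF (leq_ltn_trans (ed k ck) dm)) mulr0.
Qed.

End LeadTerm.

Definition char_eval (m : nat) (c : 'I_m -> 'I_m -> int) (r s : nat) : int :=
  \sum_(i < m) \sum_(j < m) c i j * ('C(r + i, i))%:Z * ('C(s + j, j))%:Z.

Definition char_dominated (m : nat) (c e : 'I_m -> 'I_m -> int) : Prop :=
  exists N k : nat, forall r s r' s', (N <= r)%N -> (N <= s)%N ->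
    (r + k <= r')%N -> (s + k <= s')%N -> char_eval c r s <= char_eval e r' s'.

Section CharDominated.
Variables (K : fieldType) (n : nat) (M : lmodType K).
Variables (X D : 'I_n -> {linear M -> M}).
Hypothesis weylXD : weyl_rel X D.

Lemma char_dominated_generators g h a b : generates X D h ->
  is_char_coeffs X D g a -> is_char_coeffs X D h b -> char_dominated a b.
Proof.
move=> genh [Na Ha] [Nb Hb]; have [k gh] := Wgens_in_span_Wgens weylXD g genh.
exists (maxn Na Nb), k => r s r' s'.
rewrite !geq_max => /andP [Nar Nbr] /andP [Nas Nbs] rr ss.
rewrite /char_eval; have [d1 [dim1 <-]] := Ha r s Nar Nas.
have [d2 [dim2 <-]] := Hb r' s' (leq_trans Nbr (leq_trans (leq_addr _ _) rr))
  (leq_trans Nbs (leq_trans (leq_addr _ _) ss)).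
by rewrite lez_nat (span_dim_leq dim1 dim2 (gh _ _ _ _ rr ss)).
Qed.

Lemma char_dominated0 g a : is_char_coeffs X D g a -> char_dominated (fun _ _ => 0) a.
Proof.
move=> [N Ha]; exists N, 0%N => r s r' s' Nr Ns; rewrite !addn0 => rr ss.
have [d [_ dE]] := Ha r' s' (leq_trans Nr rr) (leq_trans Ns ss).
by rewrite /char_eval -dE big1 // => i _; rewrite big1 // => j _; rewrite !mul0r.
Qed.

End CharDominated.

Lemma binomP_natr (R : comNzRingType) (t i : nat) :
  binomP (t%:R : R) i = ('C(t + i, i) * i`!)%:R.
Proof.
have ffactE : (\prod_(l < i) (t + l.+1) = (t + i) ^_ i)%N.
  elim: i => [|i IH]; first by rewrite big_ord0 ffactn0.
  by rewrite big_ord_recr /= IH ffactnS addnS /= mulnC.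
by rewrite bin_ffact -ffactE natr_prod; apply: eq_bigr => l _; rewrite natrD.
Qed.

Lemma horner_binomP (R : comNzRingType) (p : {poly R}) x i :
  (binomP p i).[x] = binomP p.[x] i.
Proof.
by rewrite /binomP horner_prod; apply: eq_bigr => l _; rewrite hornerD -polyC_natr hornerC.
Qed.

Lemma natr_fact_neq0 i : (i`!)%:R != 0 :> rat.
Proof. by rewrite pnatr_eq0 -lt0n fact_gt0. Qed.

Definition binom_poly (m : nat) (ga : 'I_m -> int) : {poly rat} :=
  \sum_(i < m) ((ga i)%:~R / (i`!)%:R) *: binomP 'X i.

Lemma binom_poly_natr m (ga : 'I_m -> int) (t : nat) :
  (binom_poly ga).[t%:R] = (\sum_i ga i * ('C(t + i, i))%:Z)%:~R.
Proof.
rewrite /binom_poly horner_sum rmorph_sum; apply: eq_bigr => i _.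
rewrite hornerZ horner_binomP hornerX binomP_natr rmorphM /= -pmulrn natrM.
by field; rewrite natr_fact_neq0.
Qed.

Lemma binom_poly_top m (ga : 'I_m -> int) (d : 'I_m) :
  (forall i : 'I_m, (d < i)%N -> ga i = 0) ->
  (size (binom_poly ga) <= d.+1)%N /\ (binom_poly ga)`_d = (ga d)%:~R / (d`!)%:R.
Proof.
move=> ga_d.
have lead (i : 'I_m) : has_lead_term (binomP ('X : {poly rat}) i) 1 i.
  by have := has_lead_term_binomP (1 : rat) i; rewrite scale1r expr1n.
have top (i : 'I_m) : (ga i)%:~R / (i`!)%:R != 0 :> rat -> (i <= d)%N.
  by rewrite leqNgt; apply: contraNN => /ga_d ->; rewrite mul0r eqxx.
rewrite /binom_poly; split; first exact: (size_sum_lead_terms (mu := fun=> 1) lead top).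
rewrite (coef_sum_lead_terms (mu := fun=> 1) lead top (leqnn d)) (bigD1 d) //= eqxx !mulr1.
rewrite big1 ?addr0 //.
by move=> i /negPf; rewrite -val_eqE => ->; rewrite mulr0.
Qed.

Lemma binom_sum_le_top m (ga de : 'I_m -> int) (d : 'I_m) N k :
  (forall i : 'I_m, (d < i)%N -> ga i = 0) -> (forall i : 'I_m, (d < i)%N -> de i = 0) ->
  (forall t, (N <= t)%N ->
     \sum_i ga i * ('C(t + i, i))%:Z <= \sum_i de i * ('C(t + k + i, i))%:Z) ->
  ga d <= de d.
Proof.
move=> ga_d de_d le_ga_de.
have [sga cga] := binom_poly_top ga_d; have [sde cde] := binom_poly_top de_d.
have inv_fact_gt0 : 0 < ((d`!)%:R : rat)^-1 by rewrite invr_gt0 ltr0n fact_gt0.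
rewrite -(ler_int rat) -(ler_pM2r inv_fact_gt0) -cga -cde.
apply: (le_coef_of_eventually_le (N := N) (k := k) _ sga sde) => t Nt.
by rewrite !binom_poly_natr ler_int le_ga_de.
Qed.

Section LexOrder.
Variable m : nat.
Implicit Types (i j p q : 'I_m).

Definition lex_rank i j : nat := (i * m + j)%N.

Lemma leq_lex_rank i j p q :
  (lex_rank i j <= lex_rank p q)%N = (i < p)%N || ((i == p) && (j <= q)%N).
Proof.
have := ltn_ord j; have := ltn_ord q; rewrite /lex_rank.
case: (ltngtP i p) => [ip|pi|/val_inj ->] qm jm; last by rewrite eqxx leq_add2l.
- have : (i.+1 * m <= p * m)%N by rewrite leq_mul2r ip orbT.
  rewrite mulSn /= => le; apply: leq_trans (leq_addr q _); apply: leq_trans le.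
  by rewrite addnC leq_add2r ltnW.
- have : (p.+1 * m <= i * m)%N by rewrite leq_mul2r pi orbT.
  rewrite mulSn -val_eqE /= gtn_eqF //= => le; apply/negbTE; rewrite -ltnNge.
  by apply: leq_trans (leq_addr j _); apply: leq_trans le; rewrite addnC ltn_add2r.
Qed.

Lemma lex_down_ind (P : 'I_m -> 'I_m -> Prop) :
  (forall i j, (forall i' j', (lex_rank i j < lex_rank i' j')%N -> P i' j') -> P i j) ->
  forall i j, P i j.
Proof.
move=> IH; suff down d i j : (m * m - lex_rank i j <= d)%N -> P i j.
  by move=> i j; apply: (down _ i j).
have rank_lt i' j' : (lex_rank i' j' < m * m)%N.
  by have := ltn_ord i'; have := ltn_ord j'; rewrite /lex_rank; nia.
elim: d i j => [|d IHd] i j rank_le.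
  by move: rank_le; rewrite leqn0 subn_eq0 leqNgt rank_lt.
apply: IH => i' j' lt; apply: IHd.
by move: (rank_lt i' j') rank_le lt; move: (lex_rank _ _) (lex_rank _ _) (m * m)%N; lia.
Qed.

End LexOrder.

Lemma is_lexmaxP m (c : 'I_m.+1 -> 'I_m.+1 -> int) p q : is_lexmax c p q <->
  c p q != 0 /\ forall i j, (lex_rank p q < lex_rank i j)%N -> c i j = 0.
Proof.
split=> [] [cpq top]; split=> // i j.
  rewrite ltnNge => ij_gt; apply/eqP; apply: contraNT ij_gt => /top ij_le.
  by rewrite leq_lex_rank; case: ij_le => [->|[-> ->]] //; rewrite eqxx orbT.
move=> cij; have : ~~ (lex_rank p q < lex_rank i j)%N by apply: contra cij => /top ->.
by rewrite -leqNgt leq_lex_rank => /orP [|/andP [/eqP -> ->]]; [left|right].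
Qed.

Section Corner.
Variable m : nat.
Implicit Types (c e : 'I_m -> 'I_m -> int).

Lemma char_eval_rows c r s : char_eval c r s =
  \sum_i (\sum_j c i j * ('C(s + j, j))%:Z) * ('C(r + i, i))%:Z.
Proof.
by apply: eq_bigr => i _; rewrite mulr_suml; apply: eq_bigr => j _; rewrite mulrAC.
Qed.

(* The one-variable comparison in the column index [j], whose hypothesis is in turn
   the one-variable comparison in the row index [i]. *)
Lemma char_dominated_corner c e p q : char_dominated c e ->
  (forall i j, (lex_rank p q < lex_rank i j)%N -> c i j = 0 /\ e i j = 0) ->
  c p q <= e p q.
Proof.
move=> [N [k dom]] top.
have row_gt (i j : 'I_m) : (p < i)%N -> (lex_rank p q < lex_rank i j)%N.
  by move=> pi; rewrite ltnNge leq_lex_rank ltnNge ltnW //= -val_eqE /= gtn_eqF.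
have col_gt (j : 'I_m) : (q < j)%N -> (lex_rank p q < lex_rank p j)%N.
  by move=> qj; rewrite ltnNge leq_lex_rank ltnn eqxx /= -ltnNge.
apply: (binom_sum_le_top (ga := c p) (de := e p) (d := q) (N := N) (k := k)).
- by move=> j /col_gt /top [].
- by move=> j /col_gt /top [].
move=> s Ns; apply: (binom_sum_le_top (d := p) (N := N) (k := k)
  (ga := fun i => \sum_j c i j * ('C(s + j, j))%:Z)
  (de := fun i => \sum_j e i j * ('C(s + k + j, j))%:Z)).
- by move=> i pi; apply: big1 => j _; have [-> _] := top _ _ (row_gt i j pi); rewrite mul0r.
- by move=> i pi; apply: big1 => j _; have [_ ->] := top _ _ (row_gt i j pi); rewrite mul0r.
by move=> t Nt; rewrite -!char_eval_rows; apply: dom.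
Qed.

End Corner.

(* Downward induction along the lexicographic order: above [(p, q)] the
   coefficients of [a] are squeezed between [0] and those of [b]. *)
Lemma is_lexmax_dominated n (a b : 'I_n.+1 -> 'I_n.+1 -> int) p q :
  char_dominated a b -> char_dominated b a -> char_dominated (fun _ _ => 0) a ->
  is_lexmax b p q -> is_lexmax a p q /\ a p q = b p q.
Proof.
move=> ab ba a_ge0 /is_lexmaxP [bpq b_top].
have a_top i j : (lex_rank p q < lex_rank i j)%N -> a i j = 0.
  move: i j; apply: lex_down_ind => i j IH pq_ij.
  have ab_top i' j' : (lex_rank i j < lex_rank i' j')%N -> a i' j' = 0 /\ b i' j' = 0.
    by move=> ij_i'j'; have pq_i'j' := ltn_trans pq_ij ij_i'j'; rewrite IH ?b_top.
  apply/eqP; rewrite eq_le -{1}(b_top _ _ pq_ij) char_dominated_corner //=.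
  by apply: (char_dominated_corner a_ge0) => i' j' /ab_top [].
have ab_pq : a p q = b p q.
  by apply/eqP; rewrite eq_le !char_dominated_corner // => i j pq_ij; rewrite a_top ?b_top.
by split=> //; apply/is_lexmaxP; rewrite ab_pq.
Qed.

Lemma char_eval_tr m (c : 'I_m -> 'I_m -> int) r s :
  char_eval (fun i j => c j i) r s = char_eval c s r.
Proof.
by rewrite /char_eval exchange_big; apply: eq_bigr => i _; apply: eq_bigr => j _; rewrite mulrAC.
Qed.

Lemma char_dominated_tr m (c e : 'I_m -> 'I_m -> int) :
  char_dominated c e -> char_dominated (fun i j => c j i) (fun i j => e j i).
Proof.
move=> [N [k dom]]; exists N, k => r s r' s' Nr Ns rr ss.
by rewrite (char_eval_tr c) (char_eval_tr e) dom.
Qed.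

Lemma is_revlexmax_tr n (c : 'I_n.+1 -> 'I_n.+1 -> int) i j :
  is_revlexmax c i j <-> is_lexmax (fun i j => c j i) j i.
Proof. by split=> [] [cij top]; split=> // i' j'; apply: top. Qed.

Lemma is_revlexmax_dominated n (a b : 'I_n.+1 -> 'I_n.+1 -> int) p q :
  char_dominated a b -> char_dominated b a -> char_dominated (fun _ _ => 0) a ->
  is_revlexmax b p q -> is_revlexmax a p q /\ a p q = b p q.
Proof.
move=> ab ba a_ge0; rewrite !is_revlexmax_tr => b_max.
by apply: (is_lexmax_dominated _ _ _ b_max); apply: char_dominated_tr.
Qed.

Section TopDegree.
Variable m : nat.
Implicit Types (c e : 'I_m -> 'I_m -> int) (D : nat).

Definition char_coef c (i j : 'I_m) : rat := (c i j)%:~R / ((i`!)%:R * (j`!)%:R).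

Definition total_deg_le c D := forall i j, c i j != 0 -> (i + j <= D)%N.

Definition ray_poly (lam : nat) c : {poly rat} :=
  \sum_(x : 'I_m * 'I_m) char_coef c x.1 x.2 *: (binomP 'X x.1 * binomP (lam%:R *: 'X) x.2).

(* The top-degree part of the characteristic polynomial at [(t1, t2) = (1, lam)],
   as a polynomial in [lam]. *)
Definition top_form c D : {poly rat} :=
  \sum_(x : 'I_m * 'I_m | (x.1 + x.2 == D)%N) char_coef c x.1 x.2 *: 'X^(x.2).

Lemma ray_poly_natr lam c (t : nat) :
  (ray_poly lam c).[t%:R] = (char_eval c t (lam * t)%N)%:~R.
Proof.
rewrite /ray_poly /char_eval pair_bigA /= horner_sum rmorph_sum; apply: eq_bigr => x _.
rewrite hornerZ hornerM !horner_binomP hornerZ hornerX.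
have -> : lam%:R * t%:R = (lam * t)%N%:R :> rat by rewrite natrM.
rewrite !binomP_natr !rmorphM /= -!pmulrn /char_coef.
by field; rewrite !pnatr_eq0 !gtn_eqF ?fact_gt0.
Qed.

Lemma ray_poly_top lam c D : total_deg_le c D ->
  (size (ray_poly lam c) <= D.+1)%N /\ (ray_poly lam c)`_D = (top_form c D).[lam%:R].
Proof.
move=> c_deg.
have lead (x : 'I_m * 'I_m) : has_lead_term
    (binomP ('X : {poly rat}) x.1 * binomP (lam%:R *: 'X) x.2)
    (1 * lam%:R ^+ x.2) (x.1 + x.2)%N.
  apply: has_lead_termM (has_lead_term_binomP _ _).
  by have := has_lead_term_binomP (1 : rat) x.1; rewrite scale1r expr1n.
have top (x : 'I_m * 'I_m) : char_coef c x.1 x.2 != 0 -> (x.1 + x.2 <= D)%N.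
  by move=> cx; apply: c_deg; apply: contraNneq cx; rewrite /char_coef => ->; rewrite mul0r.
split; first exact: size_sum_lead_terms lead top.
rewrite (coef_sum_lead_terms lead top (leqnn D)) /top_form horner_sum [RHS]big_mkcond.
apply: eq_bigr => x _; rewrite hornerZ hornerXn mul1r mulrb.
by case: eqP; rewrite ?mulr1 ?mulr0.
Qed.

Lemma coef_top_form c D (i j : 'I_m) : (i + j = D)%N -> (top_form c D)`_j = char_coef c i j.
Proof.
move=> ijD; rewrite /top_form coef_sum (bigD1 (i, j)) /= ?ijD //.
rewrite coefZ coefXn eqxx mulr1 big1 ?addr0 // => -[i' j'] /andP [/= /eqP ij'D ne].
rewrite coefZ coefXn mulrb; case: eqP => [jj'|_]; last by rewrite mulr0.
by case/eqP: ne; congr pair; apply: val_inj => /=; lia.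
Qed.

Lemma top_form_dominated c e D : char_dominated c e ->
  total_deg_le c D -> total_deg_le e D ->
  forall lam : nat, (0 < lam)%N -> (top_form c D).[lam%:R] <= (top_form e D).[lam%:R].
Proof.
move=> [N [k dom]] c_deg e_deg lam lam_gt0.
have [sc <-] := ray_poly_top lam c_deg; have [se <-] := ray_poly_top lam e_deg.
apply: (le_coef_of_eventually_le (N := N) (k := k) _ sc se) => t Nt.
rewrite !ray_poly_natr ler_int; apply: dom => //.
  exact: leq_trans Nt (leq_pmull _ lam_gt0).
by rewrite mulnDr leq_add2l leq_pmull.
Qed.

Lemma top_form_eq c e D : char_dominated c e -> char_dominated e c ->
  total_deg_le c D -> total_deg_le e D -> top_form c D = top_form e D.
Proof.
move=> ce ec c_deg e_deg; apply/eqP; rewrite -subr_eq0; apply/negPn/negP => nz.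
set w := top_form c D - top_form e D in nz.
pose rs : seq rat := [seq (x.+1)%:R | x <- iota 0 (size w)].
have w_roots : all (root w) rs.
  apply/allP => _ /mapP [x _ ->].
  by rewrite /root hornerD hornerN subr_eq0 eq_le !top_form_dominated.
have rs_uniq : uniq rs.
  by rewrite map_inj_uniq ?iota_uniq // => x y /eqP; rewrite eqr_nat => /eqP [].
by have := max_poly_roots nz w_roots rs_uniq; rewrite size_map size_iota ltnn.
Qed.

Lemma top_coeffs_dominated a b D : char_dominated a b -> char_dominated b a ->
  total_deg_le a D -> total_deg_le b D ->
  forall i j : 'I_m, (i + j = D)%N -> a i j = b i j.
Proof.
move=> ab ba a_deg b_deg i j ijD.
have := congr1 (fun p : {poly rat} => p`_j) (top_form_eq ab ba a_deg b_deg).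
rewrite /= !(coef_top_form _ ijD) /char_coef => /mulIf ab_ij.
apply: (intr_inj (R := rat)); apply: ab_ij.
by rewrite invr_neq0 // mulf_neq0 // natr_fact_neq0.
Qed.

End TopDegree.

Section CharPoly.
Local Notation MP := {mpoly rat[2]}.
Local Notation x0 := (0 : 'I_2).
Local Notation x1 := (1 : 'I_2).

Lemma msizeM_le_pred (p q : MP) : (msize (p * q) <= (msize p + msize q).-1)%N.
Proof.
have [->|p0] := eqVneq p 0; first by rewrite mul0r msize0.
have [->|q0] := eqVneq q 0; first by rewrite mulr0 msize0.
by rewrite msizeM.
Qed.

Lemma msizeXn (k : 'I_2) l : msize (('X_k : MP) ^+ l) = l.+1.
Proof. by rewrite mpolyXn msizeX mdegMn mdeg1 mul1n. Qed.

Lemma msizeM_sub (B0 B1 X0 X1 : MP) i j :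
  (msize (B0 - X0) <= i)%N -> (msize (B1 - X1) <= j)%N ->
  (msize X0 <= i.+1)%N -> (msize X1 <= j.+1)%N ->
  (msize (B0 * B1 - X0 * X1) <= i + j)%N.
Proof.
move=> s0 s1 sX0 sX1.
have -> : B0 * B1 - X0 * X1 =
    X0 * (B1 - X1) + (B0 - X0) * X1 + (B0 - X0) * (B1 - X1) by ring.
have sM (p q : MP) a b :
    (msize p <= a)%N -> (msize q <= b)%N -> (msize (p * q) <= (a + b).-1)%N.
  by move=> sp sq; apply: leq_trans (msizeM_le_pred _ _) _; move: (leq_add sp sq); lia.
apply: leq_trans (msizeD_le _ _) _; rewrite geq_max (leq_trans (sM _ _ _ _ s0 s1)) ?andbT;
  last by lia.
apply: leq_trans (msizeD_le _ _) _; rewrite geq_max.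
rewrite (leq_trans (sM _ _ _ _ sX0 s1)) ?(leq_trans (sM _ _ _ _ s0 sX1)) //.
all: lia.
Qed.

Lemma msize_binomP_sub (k : 'I_2) i : (msize (binomP ('X_k : MP) i - 'X_k ^+ i) <= i)%N.
Proof.
elim: i => [|i IH]; first by rewrite /binomP big_ord0 expr0 subrr msize0.
rewrite /binomP big_ord_recr /= -/(binomP _ i) exprSr -[X in (_ <= X)%N]addn1.
apply: msizeM_sub; rewrite ?msizeXn ?msizeX ?mdeg1 //.
by rewrite addrC addKr -mpolyC_nat msizeC; case: (_ != 0).
Qed.

Definition mon (i j : nat) : 'X_{1..2} := (U_(x0) *+ i + U_(x1) *+ j)%MM.

Lemma mdeg_mon i j : mdeg (mon i j) = (i + j)%N.
Proof. by rewrite /mon mdegD !mdegMn !mdeg1 !mul1n. Qed.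

Lemma mon_inj i j i' j' : mon i j = mon i' j' -> i = i' /\ j = j'.
Proof.
move=> e; have := congr1 (fun m : 'X_{1..2} => m x0) e.
have := congr1 (fun m : 'X_{1..2} => m x1) e.
by rewrite /mon /= !mnmDE !mulmnE !mnm1E /=; lia.
Qed.

Lemma msize_binomP2_sub i j :
  (msize (binomP ('X_x0 : MP) i * binomP 'X_x1 j - 'X_[mon i j]) <= i + j)%N.
Proof.
rewrite /mon mpolyXD -!mpolyXn.
by apply: msizeM_sub; rewrite ?msize_binomP_sub ?msizeXn.
Qed.

Lemma mcoeff_msize_le (p : MP) m : (msize p <= mdeg m)%N -> p@_m = 0.
Proof. by move=> /msize_mdeg_ge; rewrite -mcoeff_eq0 => /eqP. Qed.

Lemma msize_le_mcoeff (p : MP) d :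
  (forall m, (d <= mdeg m)%N -> p@_m = 0) -> (msize p <= d)%N.
Proof.
move=> p_d; have [->|p0] := eqVneq p 0; first by rewrite msize0.
by rewrite -(mlead_deg p0) ltnNge; apply: contraNN p0 => /p_d; rewrite -mleadc_eq0 => ->.
Qed.

Variable n : nat.
Implicit Types (c : 'I_n.+1 -> 'I_n.+1 -> int).

Lemma mcoeff_weyl_charpoly c m : total_deg_le c (mdeg m) ->
  (weyl_charpoly c)@_m = \sum_i \sum_j char_coef c i j * (mon i j == m)%:R.
Proof.
move=> c_deg; rewrite raddf_sum; apply: eq_bigr => i _.
rewrite raddf_sum; apply: eq_bigr => j _; rewrite /= mcoeffZ -/(char_coef c i j).
have [cij0|cij] := eqVneq (c i j) 0; first by rewrite /char_coef cij0 !mul0r.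
rewrite -(subrK 'X_[mon i j] (_ * _)) mcoeffD mcoeffX mcoeff_msize_le ?add0r //.
exact: leq_trans (msize_binomP2_sub i j) (c_deg _ _ cij).
Qed.

Lemma mcoeff_weyl_charpoly_mon c D (i j : 'I_n.+1) :
  total_deg_le c D -> (i + j = D)%N -> (weyl_charpoly c)@_(mon i j) = char_coef c i j.
Proof.
move=> c_deg ijD; rewrite mcoeff_weyl_charpoly ?mdeg_mon ?ijD //.
rewrite (bigD1 i) //= (bigD1 j) //= eqxx mulr1 !big1 ?addr0 // => [i' ne|j' ne].
  apply: big1 => j' _; rewrite mulr_natr mulrb.
  case: eqP => [/mon_inj [/val_inj ii' _]|//].
  by rewrite ii' eqxx in ne.
rewrite mulr_natr mulrb; case: eqP => [/mon_inj [_ /val_inj jj']|//].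
by rewrite jj' eqxx in ne.
Qed.

Lemma msize_weyl_charpoly c D (i j : 'I_n.+1) : total_deg_le c D -> (i + j = D)%N ->
  c i j != 0 -> msize (weyl_charpoly c) = D.+1.
Proof.
move=> c_deg ijD cij; apply/anti_leq/andP; split.
  apply: msize_le_mcoeff => m Dm.
  rewrite mcoeff_weyl_charpoly => [|i' j' /c_deg i'j'D]; last first.
    exact: leq_trans i'j'D (ltnW Dm).
  apply: big1 => i' _; apply: big1 => j' _.
  have [cij0|/c_deg i'j'D] := eqVneq (c i' j') 0; first by rewrite /char_coef cij0 !mul0r.
  rewrite mulr_natr mulrb; case: eqP => [mon_m|//].
  by move: Dm; rewrite -mon_m mdeg_mon ltnNge i'j'D.
rewrite -ijD -(mdeg_mon i j); apply: msize_mdeg_lt.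
rewrite mcoeff_msupp (mcoeff_weyl_charpoly_mon c_deg ijD) /char_coef.
by rewrite mulf_neq0 ?invr_neq0 ?mulf_neq0 ?natr_fact_neq0 ?intr_eq0.
Qed.

Lemma weyl_charpoly_top_eq a b :
  (forall D, total_deg_le a D -> total_deg_le b D ->
     forall i j : 'I_n.+1, (i + j = D)%N -> a i j = b i j) ->
  msize (weyl_charpoly a) = msize (weyl_charpoly b) /\
  forall m, (mdeg m).+1 = msize (weyl_charpoly a) ->
    (weyl_charpoly a)@_m = (weyl_charpoly b)@_m.
Proof.
move=> top_eq; pose supp (x : 'I_n.+1 * 'I_n.+1) := (a x.1 x.2 != 0) || (b x.1 x.2 != 0).
case: (pickP supp) => [y supp_y|supp0]; last first.
  suff -> : weyl_charpoly a = weyl_charpoly b by [].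
  apply: eq_bigr => i _; apply: eq_bigr => j _; congr (_ *: _).
  by have /norP [/negbNE/eqP -> /negbNE/eqP ->] := negbT (supp0 (i, j)).
have [[i j] /= supp_ij ij_max] := arg_maxnP (fun x : 'I_n.+1 * 'I_n.+1 => (x.1 + x.2)%N) supp_y.
have deg_le c : (forall i' j', c i' j' != 0 -> supp (i', j')) -> total_deg_le c (i + j).
  by move=> c_supp i' j' /c_supp /ij_max.
have a_deg : total_deg_le a (i + j) by apply: deg_le => i' j' aij; rewrite /supp /= aij.
have b_deg : total_deg_le b (i + j) by apply: deg_le => i' j' bij; rewrite /supp /= bij orbT.
have ab_top := top_eq _ a_deg b_deg.
have aij : a i j != 0 by move: supp_ij; rewrite /supp /= ab_top ?orbb.
have bij : b i j != 0 by rewrite -ab_top.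
rewrite (msize_weyl_charpoly a_deg _ aij) // (msize_weyl_charpoly b_deg _ bij) //.
split=> // m /eqP; rewrite eqSS => /eqP mD.
rewrite !mcoeff_weyl_charpoly ?mD //; apply: eq_bigr => i' _; apply: eq_bigr => j' _.
rewrite !mulr_natr !mulrb; case: eqP => // mon_m.
by rewrite /char_coef ab_top // -mdeg_mon mon_m.
Qed.

End CharPoly.

Lemma total_deg_le_max n (c : 'I_n.+1 -> 'I_n.+1 -> int) : total_deg_le c (n + n)%N.
Proof. by move=> i j _; rewrite leq_add // -ltnS. Qed.

Theorem theorem5p7 (K : fieldType) (n : nat) (M : lmodType K)
  (X D : 'I_n -> {linear M -> M})
  (a b : 'I_n.+1 -> 'I_n.+1 -> int) (g h : seq M) :
  [pchar K] =i pred0 ->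
  weyl_rel X D ->
  generates X D g -> generates X D h ->
  is_char_coeffs X D g a -> is_char_coeffs X D h b ->
  msize (weyl_charpoly a) = msize (weyl_charpoly b) /\
  a ord_max ord_max = b ord_max ord_max /\
  (forall i j, is_lexmax a i j <-> is_lexmax b i j) /\
  (forall i j, is_revlexmax a i j <-> is_revlexmax b i j) /\
  (forall i j, is_lexmax a i j -> a i j = b i j) /\
  (forall i j, is_revlexmax a i j -> a i j = b i j) /\
  (forall m : 'X_{1..2}, (mdeg m).+1 = msize (weyl_charpoly a) ->
      mcoeff m (weyl_charpoly a) = mcoeff m (weyl_charpoly b)).
Proof.
move=> _ weylXD gen_g gen_h char_a char_b.
have ab := char_dominated_generators weylXD gen_h char_a char_b.
have ba := char_dominated_generators weylXD gen_g char_b char_a.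
have a_ge0 := char_dominated0 char_a; have b_ge0 := char_dominated0 char_b.
have top_eq D := top_coeffs_dominated (D := D) ab ba.
have [msize_eq mcoeff_eq] := weyl_charpoly_top_eq top_eq.
have lex_ab := is_lexmax_dominated ab ba a_ge0.
have lex_ba := is_lexmax_dominated ba ab b_ge0.
have revlex_ab := is_revlexmax_dominated ab ba a_ge0.
have revlex_ba := is_revlexmax_dominated ba ab b_ge0.
split=> //; split.
  by apply: top_eq (total_deg_le_max (c := a)) (total_deg_le_max (c := b)) _ _ _.
split; first by move=> i j; split=> [/lex_ba []|/lex_ab []].
split; first by move=> i j; split=> [/revlex_ba []|/revlex_ab []].
split; first by move=> i j /lex_ba [_ ->].
by split=> // i j /revlex_ba [_ ->].
Qed.
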